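(* Let $\epsilon>0$, $T\in\mathbb{N}$, $B\ge T$, and define $k=2\lfloor B/T\rfloor$. Then there exists an instance of the UVP problem (with total budget $B$, maximum per-configuration budget $T$, smoothness parameter $\epsilon$) with $k$ clusters, each of radius $r_k>0$, such that no algorithm can achieve an approximation factor exceeding $(1-\epsilon r_k)$, where $r_k$ is the optimal clustering radius for $k$ clusters.
   Context: UVP problem: $A:\mathbb{R}^d\times[T]\to[0,1]$ is an unknown function ($[T]=\{1,\dots,T\}$); a finite set $\mathcal{X}\subset\mathbb{R}^d$ is known. The goal is $\max_{b_1,\dots,b_n}\max_{i}A(\mathbf{x}_i,b_i)$ subject to $\sum_i b_i\le B$, $b_i\in[T]$. Values are revealed only by evaluation; obtaining $A(\mathbf{x},b)$ requires evaluating $A(\mathbf{x},1),\dots,A(\mathbf{x},b)$ sequentially, costing $b$ units of budget. Instances satisfy Assumption 1 (monotonicity): $b_1\le b_2\Rightarrow A(\mathbf{x},b_1)\le A(\mathbf{x},b_2)$; and Assumption 2 (smoothness): for all $\mathbf{x}_i,\mathbf{x}_j\in\mathcal{X}$, $\min_{b\in[T]}A(\mathbf{x}_i,b)/A(\mathbf{x}_j,b)\ge1-\epsilon\|\mathbf{x}_i-\mathbf{x}_j\|_2$ (ratio $=1$ if both values are $0$, $=+\infty$ if only the denominator is $0$). The optimal clustering radius for $m$ clusters is $\min_{\mathcal{C}\subseteq\mathcal{X},|\mathcal{C}|=m}\max_{\mathbf{x}\in\mathcal{X}}\min_{\mathbf{c}\in\mathcal{C}}\|\mathbf{x}-\mathbf{c}\|_2$.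 An algorithm (possibly randomized) adaptively evaluates values within total budget $B$ and outputs $\mathbf{x}^{Alg}$; it achieves approximation factor $\alpha$ on an instance if $\mathbb{E}[A(\mathbf{x}^{Alg},T)]\ge\alpha\,\max_{\mathbf{x}\in\mathcal{X}}A(\mathbf{x},T)$. *)

From HB Require Import structures.
From mathcomp Require Import all_boot all_order all_algebra.
From mathcomp Require Import all_classical all_reals all_analysis.
Set Implicit Arguments. Unset Strict Implicit. Unset Printing Implicit Defensive.
Import Order.TTheory GRing.Theory Num.Theory.
Local Open Scope classical_set_scope.
Local Open Scope ring_scope.

Section UVP.
Variable R : realType.

Definition edist (d : nat) (x y : 'rV[R]_d) : R :=
  Num.sqrt (\sum_(j < d) (x ord0 j - y ord0 j) ^+ 2).

(* The known finite set X is given as an injective family pts : 'I_n -> R^d. *)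

(* [is_radius pts C r]: r = max_{x in X} min_{c in C} ||x - c|| (C nonempty). *)
Definition is_radius (d n : nat) (pts : 'I_n -> 'rV[R]_d) (C : {set 'I_n}) (r : R) :=
  (forall i, exists2 c, c \in C & edist (pts i) (pts c) <= r) /\
  (exists i, forall c, c \in C -> r <= edist (pts i) (pts c)).

Definition is_opt_radius (d n : nat) (pts : 'I_n -> 'rV[R]_d) (m : nat) (r : R) :=
  (exists C : {set 'I_n}, #|C| = m /\ is_radius pts C r) /\
  (forall (C : {set 'I_n}) (r' : R), #|C| = m -> is_radius pts C r' -> r <= r').

(* "a1 / a2 >= c" with the conventions: ratio 1 if both are 0, +oo if only
   the denominator is 0. *)
Definition ratio_ge (a1 a2 c : R) : Prop :=
  if a2 == 0 then (a1 == 0 -> c <= 1) else c <= a1 / a2.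

Definition uvp_valid (d n : nat) (pts : 'I_n -> 'rV[R]_d) (T : nat) (eps : R)
    (A : 'rV[R]_d -> nat -> R) : Prop :=
  (forall x b, (1 <= b <= T)%N -> 0 <= A x b <= 1) /\
  (forall x b1 b2, (1 <= b1)%N -> (b1 <= b2)%N -> (b2 <= T)%N -> A x b1 <= A x b2) /\
  (forall i j, forall b, (1 <= b <= T)%N ->
     ratio_ge (A (pts i) b) (A (pts j) b) (1 - eps * edist (pts i) (pts j))).

(* Observations: (configuration index, budget level b, revealed value A(x,b)). *)
Definition obs (n : nat) := ('I_n * nat * R)%type.

(* A deterministic adaptive algorithm: given the history of revealed values it
   either chooses the configuration to advance by one budget unit, or stops;
   at the end it outputs a configuration. *)
Record det_alg (n : nat) := DetAlg {
  alg_next : seq (obs n) -> option 'I_n ;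
  alg_out  : seq (obs n) -> 'I_n }.

Definition level n (h : seq (obs n)) (i : 'I_n) : nat :=
  count (fun o : obs n => o.1.1 == i) h.

(* Run for at most [fuel] unit steps: advancing configuration i from level b-1
   to level b reveals f i b = A(x_i, b) at cost 1; levels never exceed T. *)
Fixpoint run_hist n (al : det_alg n) (f : 'I_n -> nat -> R) (T fuel : nat)
    (h : seq (obs n)) : seq (obs n) :=
  match fuel with
  | 0 => h
  | fuel'.+1 =>
    match alg_next al h with
    | None => h
    | Some i =>
      let b := (level h i).+1 in
      if (b <= T)%N then run_hist al f T fuel' (rcons h (i, b, f i b)) else h
    end
  end.

Definition alg_output d n (al : det_alg n) (pts : 'I_n -> 'rV[R]_d)
    (A : 'rV[R]_d -> nat -> R) (T B : nat) : 'I_n :=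
  alg_out al (run_hist al (fun i b => A (pts i) b) T B [::]).

(* A randomized algorithm: a family of deterministic algorithms indexed by a
   random seed w drawn from a probability space; it is well defined when the
   event "output = i" is measurable for every instance A and every i. *)
Definition rand_alg_measurable d (d0 : measure_display) (Omega : measurableType d0)
    n (alg : Omega -> det_alg n) (pts : 'I_n -> 'rV[R]_d) (T B : nat) : Prop :=
  forall (A : 'rV[R]_d -> nat -> R) (i : 'I_n),
    measurable [set w | alg_output (alg w) pts A T B = i].

Definition exp_value d (d0 : measure_display) (Omega : measurableType d0)
    (P : probability Omega R) n (alg : Omega -> det_alg n)
    (pts : 'I_n -> 'rV[R]_d) (A : 'rV[R]_d -> nat -> R) (T B : nat) : R :=
  \sum_(i < n) fine (P [set w | alg_output (alg w) pts A T B = i]) * A (pts i) T.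

(* max_{x in X} A(x, T) (values are >= 0, so 0 is a neutral start) *)
Definition opt_value d n (pts : 'I_n -> 'rV[R]_d) (A : 'rV[R]_d -> nat -> R) (T : nat) : R :=
  \big[Num.max/0]_(i < n) A (pts i) T.

End UVP.

(* Place k + 1 points on a line so that points 0 and 1, at distance
   r = 1 / (8 eps), form one group and the k groups {0, 1}, {2}, ..., {k} lie at
   mutual distance at least 1 / eps: Assumption 2 then constrains nothing across
   groups, and the optimal k-clustering radius is r.  All values vanish below
   level T, so an algorithm learns the value of a point only by spending T on
   it, and budget B completes at most m = B / T = k / 2 points.  For a group g
   compare the instances worth 1 (resp. 0) on g and 1/2 elsewhere.  If the
   algorithm completes no point of g, both runs coincide with its run on the
   constant 1/2 instance and output the same point, which scores at most 3/2 in
   E_1 + 2 E_0; otherwise the score is at most 2.  Summing over g and averaging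
   over the random seed (Yao's principle) bounds the total by
   3k/2 + m/2 = 7m/2, while a ratio alpha > 7/8 = 1 - eps r on all 2k instances
   would push it above 4 alpha m. *)

From Pilot Require Import Defs.
From HB Require Import structures.
From mathcomp Require Import all_boot all_order all_algebra.
From mathcomp Require Import all_classical all_reals all_analysis.
From mathcomp Require Import measurable_realfun lra zify.
Set Implicit Arguments. Unset Strict Implicit. Unset Printing Implicit Defensive.
Import Order.TTheory GRing.Theory Num.Theory.
Local Open Scope ring_scope.

Section Runs.
Variables (R : realType) (n : nat) (al : det_alg R n) (T : nat).
Implicit Types (f g : 'I_n -> nat -> R) (h : seq (obs R n)).

Lemma mem_run_hist f fuel h o : o \in h -> o \in run_hist al f T fuel h.
Proof.
elim: fuel h => [|fuel IH] h oh //=.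
case: (alg_next al h) => [i|] //; case: ifP => // _.
by apply: IH; rewrite mem_rcons inE oh orbT.
Qed.

Lemma run_hist_agree f g fuel h :
  {in run_hist al f T fuel h, forall o, f o.1.1 o.1.2 = g o.1.1 o.1.2} ->
  run_hist al g T fuel h = run_hist al f T fuel h.
Proof.
elim: fuel h => [|fuel IH] h //=.
case: (alg_next al h) => [i|] //; case: ifP => // _ fg.
set o := (i, (level h i).+1, f i (level h i).+1).
have -> : g i (level h i).+1 = f i (level h i).+1.
  by rewrite (fg o) // mem_run_hist // mem_rcons mem_head.
exact: IH.
Qed.

Lemma level_rcons h o i : level (rcons h o) i = (level h i + (o.1.1 == i))%N.
Proof. by rewrite /level -cats1 count_cat /= addn0. Qed.

Definition levels_consistent h := {in h, forall o, o.1.2 <= level h o.1.1}%N.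

Lemma run_hist_consistent f fuel h :
  levels_consistent h -> levels_consistent (run_hist al f T fuel h).
Proof.
elim: fuel h => [|fuel IH] h hc //=.
case: (alg_next al h) => [i|] //; case: ifP => // _; apply: IH.
move=> o; rewrite mem_rcons inE level_rcons => /predU1P [-> | oh] /=.
  by rewrite eqxx addn1.
exact: leq_trans (hc o oh) (leq_addr _ _).
Qed.

Lemma size_run_hist f fuel h : (size (run_hist al f T fuel h) <= size h + fuel)%N.
Proof.
elim: fuel h => [|fuel IH] h /=; first by rewrite addn0.
case: (alg_next al h) => [i|]; last exact: leq_addr.
case: ifP => _; last exact: leq_addr.
by rewrite (leq_trans (IH _)) // size_rcons addSnnS.
Qed.

Lemma sum_level h : (\sum_(i < n) level h i)%N = size h.
Proof.
elim: h => [|o h IH]; first by rewrite big1.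
rewrite /level /= big_split /= -/(level h) IH (bigD1 o.1.1) //= eqxx big1 ?addn0 //.
by move=> j /negbTE; rewrite eq_sym => ->.
Qed.

Definition completed h : {set 'I_n} :=
  [set i | has (fun o : obs R n => (o.1.1 == i) && (T <= o.1.2)%N) h].

Lemma card_completed_run f B : (0 < T)%N ->
  (#|completed (run_hist al f T B [::])| <= B %/ T)%N.
Proof.
move=> T_gt0; set h := run_hist al f T B [::].
have hc : levels_consistent h by apply: run_hist_consistent.
rewrite leq_divRL // -sum_nat_const big_mkcond /=.
apply: leq_trans (size_run_hist f B [::]); rewrite -sum_level.
apply: leq_sum => i _; case: ifP => //; rewrite inE; case/hasP => o oh /andP [/eqP <- Tle].
exact: leq_trans Tle (hc o oh).
Qed.

End Runs.

Section Averaging.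
Variables (R : realType) (d0 : measure_display) (Omega : measurableType d0)
  (P : probability Omega R) (n : nat).
Implicit Types (O : Omega -> 'I_n) (v : 'I_n -> R).
Local Open Scope classical_set_scope.

Lemma sum_indicator_index O v :
  (fun w => (v (O w))%:E) =
  (fun w => \sum_(i < n) (v i)%:E * (\1_[set w | O w = i] w)%:E)%E.
Proof.
apply/funext => w; rewrite (bigD1 (O w)) //= big1 ?adde0.
  by rewrite indicE mem_set // mule1.
by move=> i /negbTE Oi; rewrite indicE memNset ?mule0 //= => Ow; rewrite Ow eqxx in Oi.
Qed.

Lemma measurable_fun_index O v : (forall i, measurable [set w | O w = i]) ->
  measurable_fun setT (fun w => (v (O w))%:E).
Proof.
move=> mO; rewrite sum_indicator_index; apply: emeasurable_sum => i.
by apply/measurable_funeM/measurable_EFinP/measurable_indic.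
Qed.

Lemma expectation_index O v :
  (forall i, measurable [set w | O w = i]) -> (forall i, 0 <= v i) ->
  (\sum_(i < n) fine (P [set w | O w = i]) * v i)%:E = (\int[P]_w (v (O w))%:E)%E.
Proof.
move=> mO v_ge0; rewrite sum_indicator_index ge0_integral_sum //; first last.
- by move=> i w _; rewrite mule_ge0 // lee_fin.
- by move=> i; apply/measurable_funeM/measurable_EFinP/measurable_indic.
rewrite -sumEFin; apply: eq_bigr => i _.
rewrite ge0_integralZl_EFin //; last exact/measurable_EFinP/measurable_indic.
by rewrite integral_indic // setIT EFinM fineK ?fin_num_measure // muleC.
Qed.

Lemma sum_expectations_le (J : finType) (Os : J -> Omega -> 'I_n)
    (V : J -> 'I_n -> R) (K : R) :
  (forall j i, measurable [set w | Os j w = i]) -> (forall j i, 0 <= V j i) ->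
  (forall w, \sum_j V j (Os j w) <= K) ->
  \sum_j \sum_(i < n) fine (P [set w | Os j w = i]) * V j i <= K.
Proof.
move=> mOs V_ge0 le_K; rewrite -lee_fin -sumEFin.
under eq_bigr => j _ do rewrite expectation_index //.
rewrite -ge0_integral_sum //; last first.
- by move=> j w _; rewrite lee_fin.
- by move=> j; apply: measurable_fun_index.
apply: (@le_trans _ _ (\int[P]_w (cst K%:E) w)%E).
  apply: ge0_le_integral => //.
  - by move=> w _; apply: sume_ge0 => j _; rewrite lee_fin.
  - by apply: emeasurable_sum => j; apply: measurable_fun_index.
  - by move=> w _; rewrite sumEFin lee_fin.
by rewrite integral_cst // [X in (_ * X)%E]probability_setT mule1.
Qed.

End Averaging.

Lemma ratio_ge_refl (R : realType) (a c : R) : c <= 1 -> ratio_ge a a c.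
Proof. by move=> c_le1; rewrite /ratio_ge; case: ifP => [_ _ //|/negbT a0]; rewrite divff. Qed.

Lemma ratio_ge_npos (R : realType) (a1 a2 c : R) :
  0 <= a1 -> 0 <= a2 -> c <= 0 -> ratio_ge a1 a2 c.
Proof.
move=> a1_ge0 a2_ge0 c_le0; rewrite /ratio_ge; case: ifP => [_ _|_].
  exact: le_trans c_le0 ler01.
exact: le_trans c_le0 (divr_ge0 _ _).
Qed.

Lemma edist_ge0 (R : realType) d (x y : 'rV[R]_d) : 0 <= Defs.edist x y.
Proof. exact: sqrtr_ge0. Qed.

Lemma edist_refl (R : realType) d (x : 'rV[R]_d) : Defs.edist x x = 0.
Proof. by rewrite /Defs.edist big1 ?sqrtr0 // => j _; rewrite subrr expr0n. Qed.

Lemma edist_const_mx (R : realType) (x y : R) :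
  Defs.edist (const_mx x : 'rV[R]_1) (const_mx y) = `|x - y|.
Proof. by rewrite /Defs.edist big_ord1 !mxE sqrtr_sqr. Qed.

Lemma is_opt_radius_separated (R : realType) d m (pts : 'I_m.+1 -> 'rV[R]_d) (r : R)
    (i0 i1 : 'I_m.+1) :
  i0 != i1 -> Defs.edist (pts i1) (pts i0) = r ->
  (forall i j, i != j -> r <= Defs.edist (pts i) (pts j)) -> is_opt_radius pts m r.
Proof.
move=> i01 d10 sep; split.
  exists (~: [set i1]); split; first by rewrite cardsC1 card_ord.
  split; last by exists i1 => c; rewrite !inE eq_sym => /sep.
  move=> i; have [-> | i_neq] := eqVneq i i1.
    by exists i0; [rewrite !inE | rewrite d10].
  by exists i; [rewrite !inE | rewrite edist_refl -d10 edist_ge0].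
move=> C r' cardC [covered _].
have /card_gt0P [i] : (0 < #|~: C|)%N by move: (cardsC C); rewrite cardC card_ord; lia.
rewrite inE => iC.
have [c cC le_r'] := covered i; apply: le_trans le_r'; apply: sep.
by apply: contraNneq iC => ->.
Qed.

Definition step_instance {R : realType} {d n} (pts : 'I_n -> 'rV[R]_d) (T : nat)
    (u : 'I_n -> R) : 'rV[R]_d -> nat -> R :=
  fun x b => if (T <= b)%N then (if [pick j | pts j == x] is Some j then u j else 0) else 0.

Section StepInstance.
Variables (R : realType) (d n : nat) (pts : 'I_n -> 'rV[R]_d) (T : nat).
Hypothesis pts_inj : injective pts.
Implicit Type u : 'I_n -> R.

Lemma step_instance_pts u i b :
  step_instance pts T u (pts i) b = if (T <= b)%N then u i else 0.
Proof.
rewrite /step_instance; case: ifP => // _.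
by case: pickP => [j /eqP /pts_inj -> //|/(_ i)]; rewrite eqxx.
Qed.

Lemma step_instance_valid (eps : R) u : 0 <= eps -> (forall i, 0 <= u i <= 1) ->
  (forall i j, u i = u j \/ 1 <= eps * Defs.edist (pts i) (pts j)) ->
  uvp_valid pts T eps (step_instance pts T u).
Proof.
move=> eps_ge0 u01 u_eq_or_far.
have range x b : 0 <= step_instance pts T u x b <= 1.
  have zero01 : (0 : R) <= 0 <= (1 : R) by rewrite lexx ler01.
  by rewrite /step_instance; case: ifP => // _; case: pickP => // j _; apply: u01.
split; [by move=> x b _; apply: range | split].
  move=> x b1 b2 _ le_b12 _; rewrite {1}/step_instance.
  case: ifP => [le_Tb1|_]; last by case/andP: (range x b2).
  by rewrite /step_instance (leq_trans le_Tb1 le_b12).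
move=> i j b _; rewrite !step_instance_pts.
have c_le1 : 1 - eps * Defs.edist (pts i) (pts j) <= 1 by rewrite gerBl mulr_ge0 ?edist_ge0.
case: ifP => _; last exact: ratio_ge_refl.
have [-> | far] := u_eq_or_far i j; first exact: ratio_ge_refl.
by apply: ratio_ge_npos; [case/andP: (u01 i) | case/andP: (u01 j) | rewrite subr_le0].
Qed.

Lemma opt_value_step_instance_ge u j : u j <= opt_value pts (step_instance pts T u) T.
Proof. by rewrite /opt_value (bigD1 j) //= step_instance_pts leqnn le_max lexx. Qed.

Lemma exp_value_step_instance (d0 : measure_display) (Omega : measurableType d0)
    (P : probability Omega R) (alg : Omega -> det_alg R n) B u :
  exp_value P alg pts (step_instance pts T u) T B =
  \sum_(i < n)
    fine (P [set w | alg_output (alg w) pts (step_instance pts T u) T B = i])%classic * u i.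
Proof. by apply: eq_bigr => i _; rewrite step_instance_pts leqnn. Qed.

Lemma alg_output_step_instance_agree (al : det_alg R n) B u u' :
  {in completed T (run_hist al (fun i b => step_instance pts T u (pts i) b) T B [::]),
    u =1 u'} ->
  alg_output al pts (step_instance pts T u') T B = alg_output al pts (step_instance pts T u) T B.
Proof.
move=> agree; congr alg_out; apply: run_hist_agree => o o_run.
rewrite !step_instance_pts; case: ifP => // le_T; apply: agree.
by rewrite inE; apply/hasP; exists o; rewrite ?eqxx.
Qed.

End StepInstance.

Section Line.
Variables (R : realType) (L r : R).
Hypotheses (r_gt0 : 0 < r) (r_le_L : r <= L).

Definition line_coord (i : nat) : R := i.-1%:R * L + (i != 0)%:R * r.

Lemma line_coord_sep_group i j : i.-1 != j.-1 -> L <= `|line_coord i - line_coord j|.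
Proof.
wlog lt_ij : i j / (i.-1 < j.-1)%N.
  move=> wlog_ij; rewrite neq_ltn => /orP [] lt; first by rewrite wlog_ij // ltn_eqF.
  by rewrite distrC wlog_ij // ltn_eqF.
move=> _; have j_neq0 : j != 0 by case: j lt_ij.
have L_ge0 : 0 <= L := le_trans (ltW r_gt0) r_le_L.
have gap_L : 0 <= (j.-1%:R - i.-1%:R - 1) * L.
  by apply: mulr_ge0 => //; rewrite subr_ge0 lerBrDr addrC natr1 ler_nat.
have gap_r : 0 <= (1 - (i != 0)%:R) * r.
  apply: mulr_ge0; last exact: ltW.
  by rewrite subr_ge0; case: (i != 0); rewrite ?ler01.
move: gap_L gap_r; rewrite !mulrBl !mul1r => gap_L gap_r.
by rewrite distrC /line_coord j_neq0 /= ger0_norm; lra.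
Qed.

Lemma line_coord_sep i j : i != j -> r <= `|line_coord i - line_coord j|.
Proof.
move=> ij; have [eq_ij|] := eqVneq i.-1 j.-1; last first.
  by move/line_coord_sep_group; apply: le_trans.
case: i j ij eq_ij => [|[|i]] [|[|j]] //= ij eq_ij; rewrite /line_coord /=.
- by rewrite !(mul0r, mul1r, add0r, sub0r) normrN gtr0_norm.
- by rewrite !(mul0r, mul1r, add0r, subr0) gtr0_norm.
- by case: eq_ij ij => ->; rewrite eqxx.
Qed.

End Line.

Section HardInstances.
Variables (R : realType) (eps : R) (k : nat).
Hypothesis eps_gt0 : 0 < eps.

Let L := eps^-1.
Let r := eps^-1 / 8.

Let r_gt0 : 0 < r. Proof. by rewrite divr_gt0 ?invr_gt0. Qed.

Let r_le_L : r <= L.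
Proof. by rewrite ler_pdivrMr // ler_peMr // ?ler1n // ltW ?invr_gt0. Qed.

Definition hard_pts (i : 'I_k.+2) : 'rV[R]_1 := const_mx (line_coord L r i).

Definition group (i : 'I_k.+2) : 'I_k.+1 := inord i.-1.

Definition peaked (g : 'I_k.+1) (top : R) (i : 'I_k.+2) : R :=
  if group i == g then top else 1 / 2.

Lemma hard_pts_sep i j : i != j -> r <= Defs.edist (hard_pts i) (hard_pts j).
Proof. by rewrite edist_const_mx; apply: line_coord_sep. Qed.

Lemma hard_pts_injective : injective hard_pts.
Proof.
move=> i j; apply: contra_eq => /hard_pts_sep; apply: contraTneq => ->.
by rewrite edist_refl -ltNge.
Qed.

Lemma is_opt_radius_hard_pts : is_opt_radius hard_pts k.+1 r.
Proof.
apply: (@is_opt_radius_separated _ _ _ _ _ ord0 (inord 1)).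
- by rewrite -val_eqE /= inordK.
- by rewrite edist_const_mx /line_coord inordK //= !mul0r !add0r mul1r subr0 gtr0_norm.
- exact: hard_pts_sep.
Qed.

Lemma group_neq_far i j : group i != group j ->
  1 <= eps * Defs.edist (hard_pts i) (hard_pts j).
Proof.
move=> group_ij; rewrite -[1](mulfV (lt0r_neq0 eps_gt0)) ler_pM2l // edist_const_mx.
by apply: line_coord_sep_group => //; apply: contraNneq group_ij; rewrite /group => ->.
Qed.

Lemma peaked_valid T g top : 0 <= top <= 1 ->
  uvp_valid hard_pts T eps (step_instance hard_pts T (peaked g top)).
Proof.
move=> top01; apply: (step_instance_valid T hard_pts_injective (ltW eps_gt0)).
  by move=> i; rewrite /peaked; case: ifP => // _; apply/andP; split; lra.
move=> i j; have [eq_group | /group_neq_far] := eqVneq (group i) (group j); last by right.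
by left; rewrite /peaked eq_group.
Qed.

Variables (T B : nat).
Hypothesis T_gt0 : (0 < T)%N.

Let out al g top := alg_output al hard_pts (step_instance hard_pts T (peaked g top)) T B.

Lemma peaked_outputs_le (al : det_alg R k.+2) :
  \sum_(g < k.+1) (peaked g 1 (out al g 1) + 2 * peaked g 0 (out al g 0))
  <= (3 * k.+1%:R + (B %/ T)%:R) / 2.
Proof.
set h := run_hist al (fun i b => step_instance hard_pts T (fun=> 1 / 2) (hard_pts i) b)
  T B [::].
set seen := group @: completed T h.
have card_seen : (#|seen| <= B %/ T)%N.
  exact: leq_trans (leq_imset_card _ _) (card_completed_run _ _ _ T_gt0).
have out_unseen g top : g \notin seen -> out al g top = alg_out al h.
  move=> g_unseen.
  rewrite /out (alg_output_step_instance_agree hard_pts_injective (u := fun=> 1 / 2)) //.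
  move=> i i_done.
  by rewrite /peaked ifN //; apply: contraNneq g_unseen => <-; apply: imset_f.
have per_group g : peaked g 1 (out al g 1) + 2 * peaked g 0 (out al g 0)
    <= 3 / 2 + (if g \in seen then 1 / 2 else 0).
  have [_ | g_unseen] := boolP (g \in seen).
    by rewrite /peaked; case: ifP => _; case: ifP => _; lra.
  by rewrite !out_unseen // /peaked; case: ifP => _; lra.
apply: le_trans (ler_sum _ (fun g _ => per_group g)) _.
rewrite big_split /= -big_mkcond /= !sumr_const card_ord.
rewrite -[3 / 2 *+ _]mulr_natr -[1 / 2 *+ _]mulr_natr.
have : #|seen|%:R <= (B %/ T)%:R :> R by rewrite ler_nat.
lra.
Qed.

Variables (d0 : measure_display) (Omega : measurableType d0) (P : probability Omega R)
  (alg : Omega -> det_alg R k.+2).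
Hypothesis alg_meas : rand_alg_measurable alg hard_pts T B.

Let E g top := exp_value P alg hard_pts (step_instance hard_pts T (peaked g top)) T B.

Lemma sum_exp_value_peaked_le :
  \sum_(g < k.+1) (E g 1 + 2 * E g 0) <= (3 * k.+1%:R + (B %/ T)%:R) / 2.
Proof.
pose top (b : bool) : R := if b then 1 else 0.
pose weight (b : bool) : R := if b then 1 else 2.
pose F g b := \sum_(i < k.+2)
  fine (P [set w | out (alg w) g (top b) = i])%classic * (weight b * peaked g (top b) i).
have -> : \sum_g (E g 1 + 2 * E g 0) = \sum_g \sum_b F g b.
  apply: eq_bigr => g _; rewrite big_bool /E.
  rewrite !(exp_value_step_instance T hard_pts_injective) mulr_sumr.
  by congr (_ + _); apply: eq_bigr => i _; rewrite /= ?mul1r // mulrCA.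
rewrite pair_bigA; apply: sum_expectations_le => [p i | [g []] i | w].
- exact: alg_meas.
- by rewrite /= /peaked; case: ifP => _; lra.
- by rewrite /= /peaked; case: ifP => _; lra.
rewrite -(pair_bigA _ (fun g b => weight b * peaked g (top b) (out (alg w) g (top b)))).
under eq_bigr => g _ do rewrite big_bool /= mul1r.
exact: peaked_outputs_le.
Qed.

Hypothesis k_eq : (2 * (B %/ T))%N = k.+1.

Lemma exists_bad_peaked alpha : 7 / 8 < alpha ->
  exists g top, (0 <= top <= 1) /\
    E g top < alpha * opt_value hard_pts (step_instance hard_pts T (peaked g top)) T.
Proof.
move=> lt_alpha; have alpha_gt0 : 0 < alpha by lra.
have /existsP [g /orP [lt1 | lt0]] : [exists g, (E g 1 < alpha) || (E g 0 < alpha / 2)].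
- apply: contraLR sum_exp_value_peaked_le => /existsPn all_good; rewrite -ltNge.
  have : \sum_(g < k.+1) (alpha + alpha) <= \sum_g (E g 1 + 2 * E g 0).
    apply: ler_sum => g _; move: (all_good g); rewrite negb_or -!leNgt => /andP [? ?].
    lra.
  have k_R : k.+1%:R = 2 * (B %/ T)%:R :> R by rewrite -k_eq natrM.
  rewrite sumr_const card_ord -[(alpha + alpha) *+ _]mulr_natr k_R.
  have : 1 <= (B %/ T)%:R :> R by rewrite ler1n; lia.
  nra.
- exists g, 1; split; first by rewrite ler01 lexx.
  have opt_ge1 : 1 <= opt_value hard_pts (step_instance hard_pts T (peaked g 1)) T.
    apply: le_trans (opt_value_step_instance_ge T hard_pts_injective _ (lift ord0 g)).
    by rewrite /peaked ifT // -val_eqE /group lift0 /= inordK.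
  have := ler_wpM2l (ltW alpha_gt0) opt_ge1; rewrite mulr1; exact: lt_le_trans.
- exists g, 0; split; first by rewrite lexx ler01.
  have [j group_j] : exists j, group j != g.
    exists (if g == 0%N :> nat then ord_max else ord0); rewrite -val_eqE /group.
    by have [g0 | g_neq0] := eqVneq (g : nat) 0%N; rewrite /= inordK //; lia.
  have opt_ge_half : 1 / 2 <= opt_value hard_pts (step_instance hard_pts T (peaked g 0)) T.
    apply: le_trans (opt_value_step_instance_ge T hard_pts_injective _ j).
    by rewrite /peaked ifN.
  have := ler_wpM2l (ltW alpha_gt0) opt_ge_half; rewrite mul1r; exact: lt_le_trans.
Qed.

End HardInstances.

Theorem corollary1 (R : realType) (eps : R) (T B : nat) :
  0 < eps -> (0 < T)%N -> (T <= B)%N ->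
  let k := (2 * (B %/ T))%N in
  exists (d n : nat) (pts : 'I_n -> 'rV[R]_d), injective pts /\
  exists r : R, 0 < r /\ is_opt_radius pts k r /\
  forall (d0 : measure_display) (Omega : measurableType d0)
         (P : probability Omega R) (alg : Omega -> det_alg R n),
    rand_alg_measurable alg pts T B ->
    forall alpha : R, 1 - eps * r < alpha ->
      exists A : 'rV[R]_d -> nat -> R,
        uvp_valid pts T eps A /\
        exp_value P alg pts A T B < alpha * opt_value pts A T.
Proof.
move=> eps_gt0 T_gt0 le_TB K.
have [k k_eq] : exists k, (2 * (B %/ T))%N = k.+1.
  by exists (2 * (B %/ T)).-1; rewrite prednK // muln_gt0 divn_gt0.
rewrite {}/K k_eq.
exists 1%N, k.+2, (@hard_pts R eps k); split; first exact: hard_pts_injective.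
exists (eps^-1 / 8); split; first by rewrite divr_gt0 ?invr_gt0.
split; first exact: is_opt_radius_hard_pts.
move=> d0 Omega P alg alg_meas alpha.
rewrite mulrA mulfV ?lt0r_neq0 // => lt_alpha.
have seven_eighths : 7 / 8 < alpha by lra.
have [g [top [top01 bad]]] :=
  exists_bad_peaked eps_gt0 T_gt0 P alg_meas k_eq seven_eighths.
exists (step_instance (@hard_pts R eps k) T (peaked g top)).
by split; first exact: peaked_valid.
Qed.
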